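(* Let $Q=[u_1,\dots,u_n]\subset\mathbb{S}^2$ be a spherical polygon and let $u_iu_{i+1}$ and $u_ju_{j+1}$ be two edges with $j\neq i+1$ and $i\neq j+1$. Then $Q$ has an antipodal intersection at these edges if and only if $$\operatorname{sign}[u_i,u_{i+1},u_j]=\operatorname{sign}[u_i,u_j,u_{j+1}]=-\operatorname{sign}[u_i,u_{i+1},u_{j+1}]=-\operatorname{sign}[u_{i+1},u_j,u_{j+1}].$$ Moreover this happens if and only if the set $\{u_i,u_{i+1},u_j,u_{j+1}\}$ is not contained in any closed hemisphere.
   Context: A spherical polygon has edges the minimal great-circle arcs between consecutive vertices (indices mod $n$). Standing assumption: no three vertices of $Q$ are linearly dependent. $[a,b,c]$ denotes the determinant of $a,b,c\in\mathbb{R}^3$. An antipodal intersection at edges $e,f$ means that $e$ intersects the antipodal arc $-f$. *)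

From HB Require Import structures.
From mathcomp Require Import all_boot all_order all_algebra.
From mathcomp Require Import reals.
Set Implicit Arguments. Unset Strict Implicit. Unset Printing Implicit Defensive.
Import Order.TTheory GRing.Theory Num.Theory.
Local Open Scope ring_scope.

Section Sphere.
Variable R : realType.
Notation vec := 'rV[R]_3.

Definition dot (x y : vec) : R := \sum_(k < 3) x 0 k * y 0 k.

Definition on_sphere (x : vec) : Prop := dot x x = 1.

Definition mat3 (a b c : vec) : 'M[R]_3 := col_mx a (col_mx b c).

Definition det3 (a b c : vec) : R := \det (mat3 a b c).

Definition lin_dep3 (a b c : vec) : Prop := ~~ row_free (mat3 a b c).

(* Minimal great-circle arc between two non-antipodal points a, b of S^2
   (as a closed set of points):  the points of S^2 in the cone spanned by a, b. *)
Definition arc (a b : vec) : vec -> Prop :=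
  fun x => on_sphere x /\ exists s t : R, 0 <= s /\ 0 <= t /\ x = s *: a + t *: b.

(* The antipodal arc -f of the arc f = ab is the arc from -a to -b. *)
Definition antipodal_intersection (a b c d : vec) : Prop :=
  exists x, arc a b x /\ arc (- c) (- d) x.

(* Closed hemisphere with pole v (v nonzero). *)
Definition in_closed_hemisphere (v x : vec) : Prop := 0 <= dot v x.

Definition spherical_polygon (n : nat) (u : 'I_n -> vec) : Prop :=
  (forall i, on_sphere (u i)) /\
  (forall a b c : 'I_n, a != b -> b != c -> a != c -> ~ lin_dep3 (u a) (u b) (u c)).

End Sphere.

From HB Require Import structures.
From mathcomp Require Import all_boot all_order all_algebra.
From mathcomp Require Import reals ring lra.
Set Implicit Arguments. Unset Strict Implicit. Unset Printing Implicit Defensive.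
Import Order.TTheory GRing.Theory Num.Theory.
Local Open Scope ring_scope.

(* Write a = u_i, b = u_(i+1), c = u_j, d = u_(j+1).  Since any three of these
   points are linearly independent, the linear relations among them form a line,
   spanned by Cramer's relation [b,c,d] a - [a,c,d] b + [a,b,d] c - [a,b,c] d = 0.
   A common point of e and -f is a relation s a + t b + p c + q d = 0 with
   nonnegative coefficients, not all zero; being proportional to Cramer's, it has
   all coefficients positive, which is exactly the sign condition.  A strictly
   positive relation, paired with the pole v of a closed hemisphere containing the
   four points, forces v to be orthogonal to a, b, c, hence v = 0.  Conversely, if
   the signs are not of that form, two of the points lie strictly on the same side
   of the plane through the other two, and the normal of that plane is the pole
   of a hemisphere containing all four. *)

Lemma det_mx33 (T : comPzRingType) (M : 'M[T]_3) : \det M =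
  M 0 0 * (M 1 1 * M 2 2 - M 1 2 * M 2 1) - M 0 1 * (M 1 0 * M 2 2 - M 1 2 * M 2 0)
  + M 0 2 * (M 1 0 * M 2 1 - M 1 1 * M 2 0).
Proof.
(* Indexing by nat lets [/=] compute the lifted indices of the cofactor expansion. *)
pose f (i j : nat) := M (inord i) (inord j).
have Mf i j : M i j = f i j by rewrite /f !inord_val.
rewrite (expand_det_row _ 0) !big_ord_recl big_ord0 /cofactor.
rewrite !(expand_det_row _ 0) !big_ord_recl !big_ord0 /cofactor !det_mx11 !mxE !Mf.
by rewrite /= /bump /=; ring.
Qed.

Lemma row3P (T : Type) (x y : 'rV[T]_3) :
  x 0 0 = y 0 0 -> x 0 1 = y 0 1 -> x 0 2 = y 0 2 -> x = y.
Proof.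
move=> h0 h1 h2; apply/rowP => -[[|[|[|//]]] k3].
- by rewrite (_ : Ordinal k3 = 0) //; apply: val_inj.
- by rewrite (_ : Ordinal k3 = 1) //; apply: val_inj.
- by rewrite (_ : Ordinal k3 = 2) //; apply: val_inj.
Qed.

Lemma big_ord3 (T : nmodType) (F : 'I_3 -> T) : \sum_(k < 3) F k = F 0 + F 1 + F 2.
Proof.
rewrite !big_ord_recl big_ord0 addr0 addrA.
by congr (_ + F _ + F _); apply: val_inj.
Qed.

Lemma ordS_neq n (i j : 'I_n) : i != j -> ordS i != i.
Proof.
case: n i j => [[]//|[|n]] i j; first by rewrite !ord1.
move=> _; rewrite -val_eqE /=; have := ltn_ord i; rewrite ltnS leq_eqVlt.
case/orP => [/eqP -> | lt_i]; first by rewrite modnn.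
by rewrite modn_small // gtn_eqF.
Qed.

Lemma sgr_eq_mul_gt0 (T : realDomainType) (x y : T) :
  x != 0 -> (Num.sg x == Num.sg y) = (0 < x * y).
Proof. by move=> x0; rewrite -[0 < _](sgr_cp0 _).1.1 sgrM mulr_sg_eq1 x0. Qed.

Lemma sg_pattern (T : realDomainType) (D1 D2 D3 D4 : T) : D1 != 0 ->
  (Num.sg D1 = Num.sg D2 /\ Num.sg D2 = - Num.sg D3 /\ - Num.sg D3 = - Num.sg D4) <->
  [/\ 0 < D1 * D2, 0 < D1 * - D3 & 0 < D1 * - D4].
Proof.
move=> D0; rewrite -!sgrN -!(sgr_eq_mul_gt0 _ D0).
by split=> [[-> [-> ->]] | [/eqP <- /eqP <- /eqP <-]].
Qed.

Section Sphere.
Variable R : realType.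
Notation vec := 'rV[R]_3.
Implicit Types (a b c d v w x y z : vec) (s t p q k : R).

Lemma dotE x y : dot x y = x 0 0 * y 0 0 + x 0 1 * y 0 1 + x 0 2 * y 0 2.
Proof. exact: big_ord3. Qed.

Lemma dotZl k v x : dot (k *: v) x = k * dot v x.
Proof. by rewrite !dotE !mxE; ring. Qed.

Lemma dotZr k v x : dot v (k *: x) = k * dot v x.
Proof. by rewrite !dotE !mxE; ring. Qed.

Lemma dotDr v x y : dot v (x + y) = dot v x + dot v y.
Proof. by rewrite !dotE !mxE; ring. Qed.

Lemma dot0l x : dot 0 x = 0.
Proof. by rewrite dotE !mxE; ring. Qed.

Lemma dot0r v : dot v 0 = 0.
Proof. by rewrite dotE !mxE; ring. Qed.

Lemma dot_gt0 v : v != 0 -> 0 < dot v v.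
Proof.
have sq_ge0 (i : 'I_3) : 0 <= v 0 i * v 0 i by rewrite -expr2 sqr_ge0.
move=> v0; rewrite lt_def /dot sumr_ge0 ?andbT //.
apply: contra v0 => /eqP vv; apply/eqP/rowP => i; rewrite mxE.
by apply/eqP; rewrite -[_ == 0]orbb -mulf_eq0; apply/eqP/(psumr_eq0P _ vv).
Qed.

Lemma sphere_scale v : v != 0 -> exists2 k, 0 < k & on_sphere (k *: v).
Proof.
move=> /dot_gt0 vv; exists (Num.sqrt (dot v v))^-1.
  by rewrite invr_gt0 sqrtr_gt0.
rewrite /on_sphere dotZl dotZr mulrA -expr2 exprVn sqr_sqrtr ?ltW //.
by rewrite mulVf ?gt_eqF.
Qed.

Lemma mat3E a b c (i j : 'I_3) : mat3 a b c i j = [:: a 0 j; b 0 j; c 0 j]`_i.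
Proof.
rewrite mxE; case: splitP => [k|k] ->; first by rewrite ord1.
by rewrite mxE; case: splitP => l ->; rewrite ord1.
Qed.

Lemma det3E a b c : det3 a b c =
  a 0 0 * (b 0 1 * c 0 2 - b 0 2 * c 0 1) - a 0 1 * (b 0 0 * c 0 2 - b 0 2 * c 0 0)
  + a 0 2 * (b 0 0 * c 0 1 - b 0 1 * c 0 0).
Proof. by rewrite /det3 det_mx33 !mat3E. Qed.

Lemma det3_neq0 a b c : ~ lin_dep3 a b c -> det3 a b c != 0.
Proof. by move/negP/negbNE; rewrite row_free_unit unitmxE unitfE. Qed.

Lemma det3_rot a b c : det3 b c a = det3 a b c.
Proof. by rewrite !det3E; ring. Qed.

Lemma det3_swap a b c : det3 a c b = - det3 a b c.
Proof. by rewrite !det3E; ring. Qed.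

Lemma det3_dup13 x y : det3 x y x = 0.
Proof. by rewrite det3E; ring. Qed.

Lemma det3_dup23 x y : det3 x y y = 0.
Proof. by rewrite det3E; ring. Qed.

Lemma det3D x y v w : det3 x y (v + w) = det3 x y v + det3 x y w.
Proof. by rewrite !det3E !mxE; ring. Qed.

Lemma det3Z x y k v : det3 x y (k *: v) = k * det3 x y v.
Proof. by rewrite !det3E !mxE; ring. Qed.

Lemma det3_0 x y : det3 x y 0 = 0.
Proof. by rewrite det3E !mxE; ring. Qed.

Definition cross x y : vec :=
  \row_k [:: x 0 1 * y 0 2 - x 0 2 * y 0 1; x 0 2 * y 0 0 - x 0 0 * y 0 2;
             x 0 0 * y 0 1 - x 0 1 * y 0 0]`_k.

Lemma dot_cross x y z : dot (cross x y) z = det3 x y z.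
Proof. by rewrite dotE det3E !mxE /=; ring. Qed.

Lemma det3_reciprocal a b c v :
  det3 a b c *: v = dot v a *: cross b c + dot v b *: cross c a + dot v c *: cross a b.
Proof. by apply: row3P; rewrite !mxE /= !dotE det3E; ring. Qed.

Lemma orthogonal3_eq0 a b c v : det3 a b c != 0 ->
  dot v a = 0 -> dot v b = 0 -> dot v c = 0 -> v = 0.
Proof.
move=> D0 va vb vc; have /eqP : det3 a b c *: v = 0.
  by rewrite det3_reciprocal va vb vc !scale0r !addr0.
by rewrite scaler_eq0 (negbTE D0) => /eqP.
Qed.

Lemma plane_pole x y z w : 0 < det3 x y z * det3 x y w ->
  exists2 v, v != 0 & [/\ dot v x = 0, dot v y = 0, 0 < dot v z & 0 < dot v w].
Proof.
move=> zw; have D0 : det3 x y z != 0 by apply: contraTneq zw => ->; rewrite mul0r ltxx.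
have vz : 0 < dot (det3 x y z *: cross x y) z.
  by rewrite dotZl dot_cross -expr2 lt0r sqr_ge0 andbT expf_neq0.
exists (det3 x y z *: cross x y); first by apply: contraTneq vz => ->; rewrite dot0l ltxx.
by split; rewrite // dotZl dot_cross ?det3_dup13 ?det3_dup23 ?mulr0.
Qed.

Definition surrounds_origin a b c d : Prop := exists s t p q,
  [/\ 0 < s, 0 < t, 0 < p, 0 < q & s *: a + t *: b + p *: c + q *: d = 0].

Definition hemispherical a b c d : Prop := exists v, v != 0 /\
  in_closed_hemisphere v a /\ in_closed_hemisphere v b /\
  in_closed_hemisphere v c /\ in_closed_hemisphere v d.

Section FourPoints.
Variables a b c d : vec.

Lemma relation_coefs s t p q : s *: a + t *: b + p *: c + q *: d = 0 ->
  [/\ det3 a b c * s = - q * det3 b c d, det3 a b c * t = q * det3 a c d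
    & det3 a b c * p = - q * det3 a b d].
Proof.
move=> rel; have lin x y :
    s * det3 x y a + t * det3 x y b + p * det3 x y c + q * det3 x y d = 0.
  by rewrite -!det3Z -!det3D rel det3_0.
have := lin b c; have := lin a c; have := lin a b.
rewrite !det3_dup13 !det3_dup23 (det3_rot a b c) (det3_swap a b c) => Eab Eac Ebc.
by split; lra.
Qed.

Hypotheses (Dabc : det3 a b c != 0) (Dacd : det3 a c d != 0).
Hypotheses (Dabd : det3 a b d != 0) (Dbcd : det3 b c d != 0).

Lemma surrounds_originE :
  surrounds_origin a b c d <-> [/\ 0 < det3 a b c * det3 a c d,
    0 < det3 a b c * - det3 a b d & 0 < det3 a b c * - det3 b c d].
Proof.
have DD : 0 < det3 a b c * det3 a b c.
  by rewrite -expr2 lt0r sqr_ge0 andbT expf_neq0.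
split=> [[s [t [p [q [s0 t0 p0 q0 /relation_coefs [Es Et Ep]]]]]] | [h2 h3 h4]].
  have pos r r' : 0 < r -> det3 a b c * r = q * r' -> 0 < det3 a b c * r'.
    by move=> r0 E; rewrite -(pmulr_rgt0 _ q0) mulrCA -E mulrA mulr_gt0.
  split; [exact: pos Et | apply: pos p0 _ | apply: pos s0 _].
    by rewrite Ep mulrN mulNr.
  by rewrite Es mulrN mulNr.
(* Cramer's rule [b,c,d] a - [a,c,d] b + [a,b,d] c = [a,b,c] d, scaled by -[a,b,c]. *)
exists (det3 a b c * - det3 b c d), (det3 a b c * det3 a c d),
  (det3 a b c * - det3 a b d), (det3 a b c * det3 a b c).
by split => //; apply: row3P; rewrite !mxE !det3E; ring.
Qed.

Lemma surrounds_of_antipodal :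
  antipodal_intersection a b c d -> surrounds_origin a b c d.
Proof.
move=> [x [[x1 [s [t [s0 [t0 ex]]]]] [_ [p [q [p0 [q0 ex']]]]]]].
have rel : s *: a + t *: b + p *: c + q *: d = 0.
  apply/rowP => k; have := congr1 (fun v : vec => v 0 k) ex'.
  by rewrite ex !mxE; lra.
have [Es Et Ep] := relation_coefs rel.
have x0 : x != 0.
  apply/eqP => x00; move: x1; rewrite /on_sphere x00 dot0l => /esym/eqP.
  by rewrite oner_eq0.
have q_gt0 : 0 < q.
  rewrite lt0r q0 andbT; apply: contra_neq x0 => q00; move: Es Et.
  rewrite q00 !(oppr0, mul0r) => /eqP + /eqP.
  rewrite !mulf_eq0 (negbTE Dabc) /= => /eqP s00 /eqP t00.
  by rewrite ex s00 t00 !scale0r addr0.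
have pos (r r' : R) : 0 <= r -> det3 a b c * r = r' -> r' != 0 -> 0 < r.
  by move=> r0 <-; rewrite lt0r r0 andbT mulf_eq0 negb_or => /andP[].
have qD := mulf_neq0 (lt0r_neq0 q_gt0).
exists s, t, p, q; split => //.
- by apply: pos s0 Es _; rewrite mulNr oppr_eq0 qD.
- exact: pos t0 Et (qD _ Dacd).
- by apply: pos p0 Ep _; rewrite mulNr oppr_eq0 qD.
Qed.

Lemma antipodal_of_surrounds :
  surrounds_origin a b c d -> antipodal_intersection a b c d.
Proof.
move=> [s [t [p [q [s0 t0 p0 q0 rel]]]]].
have y0 : s *: a + t *: b != 0.
  move: (mulf_neq0 (lt0r_neq0 s0) Dabc); apply: contra_neq => y00.
  have := det3D b c (s *: a) (t *: b).
  by rewrite y00 det3_0 !det3Z det3_dup13 (det3_rot a b c) mulr0 addr0.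
have [k k0 xS] := sphere_scale y0.
exists (k *: (s *: a + t *: b)); split; split => //.
  exists (k * s), (k * t).
  by rewrite !mulr_ge0 ?ltW // scalerDr !scalerA.
exists (k * p), (k * q); rewrite !mulr_ge0 ?ltW //; do 2!split => //.
move/eqP: rel; rewrite -addrA addr_eq0 => /eqP ->.
by rewrite !scalerN scalerDr opprD !scalerA.
Qed.

Lemma not_hemispherical_of_surrounds :
  surrounds_origin a b c d -> ~ hemispherical a b c d.
Proof.
move=> [s [t [p [q [s0 t0 p0 q0 rel]]]]] [v [v0 [va [vb [vc vd]]]]].
have : s * dot v a + t * dot v b + p * dot v c + q * dot v d = 0.
  by rewrite -!dotZr -!dotDr rel dot0r.
rewrite /in_closed_hemisphere in va vb vc vd => comb.
have [va0 vb0 vc0] : [/\ dot v a = 0, dot v b = 0 & dot v c = 0] by split; nra.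
by move/eqP: v0; apply; apply: orthogonal3_eq0 Dabc va0 vb0 vc0.
Qed.

Lemma surrounds_of_not_hemispherical :
  ~ hemispherical a b c d -> surrounds_origin a b c d.
Proof.
move=> nh; apply/surrounds_originE.
have hemi v : v != 0 -> 0 <= dot v a -> 0 <= dot v b -> 0 <= dot v c ->
    0 <= dot v d -> hemispherical a b c d.
  by move=> *; exists v.
split; rewrite ltNge; apply/negP => h; apply: nh.
- have [|v v0 [va vc vb vd]] := @plane_pole a c b d.
    by rewrite (det3_swap a b c) mulNr lt0r oppr_eq0 mulf_neq0 // oppr_ge0.
  by apply: (hemi v v0); rewrite ?va ?vc ?(ltW vb) ?(ltW vd).
- have [|v v0 [va vb vc vd]] := @plane_pole a b c d.
    by rewrite lt0r mulf_neq0 // -oppr_le0 -mulrN.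
  by apply: (hemi v v0); rewrite ?va ?vb ?(ltW vc) ?(ltW vd).
- have [|v v0 [vb vc va vd]] := @plane_pole b c a d.
    by rewrite (det3_rot a b c) lt0r mulf_neq0 // -oppr_le0 -mulrN.
  by apply: (hemi v v0); rewrite ?vb ?vc ?(ltW va) ?(ltW vd).
Qed.

Lemma antipodal_surrounds :
  antipodal_intersection a b c d <-> surrounds_origin a b c d.
Proof. by split; [exact: surrounds_of_antipodal | exact: antipodal_of_surrounds]. Qed.

Lemma surrounds_not_hemispherical :
  surrounds_origin a b c d <-> ~ hemispherical a b c d.
Proof.
by split; [exact: not_hemispherical_of_surrounds | exact: surrounds_of_not_hemispherical].
Qed.

End FourPoints.

Lemma polygon_det3_neq0 n (u : 'I_n -> vec) (i j k : 'I_n) : spherical_polygon u ->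
  i != j -> j != k -> i != k -> det3 (u i) (u j) (u k) != 0.
Proof. by move=> [_ nondeg] ij jk ik; apply/det3_neq0/nondeg. Qed.

End Sphere.

Theorem proposition3 (R : realType) (n : nat) (u : 'I_n -> 'rV[R]_3)
    (i j : 'I_n) :
  spherical_polygon u ->
  i != j -> j != ordS i -> i != ordS j ->
  (antipodal_intersection (u i) (u (ordS i)) (u j) (u (ordS j)) <->
   (Num.sg (det3 (u i) (u (ordS i)) (u j)) = Num.sg (det3 (u i) (u j) (u (ordS j))) /\
    Num.sg (det3 (u i) (u j) (u (ordS j))) = - Num.sg (det3 (u i) (u (ordS i)) (u (ordS j))) /\
    - Num.sg (det3 (u i) (u (ordS i)) (u (ordS j))) = - Num.sg (det3 (u (ordS i)) (u j) (u (ordS j))))) /\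
  (antipodal_intersection (u i) (u (ordS i)) (u j) (u (ordS j)) <->
   ~ (exists v : 'rV[R]_3, v != 0 /\
        in_closed_hemisphere v (u i) /\ in_closed_hemisphere v (u (ordS i)) /\
        in_closed_hemisphere v (u j) /\ in_closed_hemisphere v (u (ordS j)))).
Proof.
move=> Q ij ji1 ij1.
have ii1 : i != ordS i by rewrite eq_sym (ordS_neq ij).
have jj1 : j != ordS j by rewrite eq_sym (ordS_neq (j := i)) // eq_sym.
have i1j : ordS i != j by rewrite eq_sym.
have i1j1 : ordS i != ordS j by rewrite (inj_eq (@ordS_inj n)).
have Dabc := polygon_det3_neq0 Q ii1 i1j ij.
have Dacd := polygon_det3_neq0 Q ij jj1 ij1.
have Dabd := polygon_det3_neq0 Q ii1 i1j1 ij1.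
have Dbcd := polygon_det3_neq0 Q i1j jj1 i1j1.
have anti := antipodal_surrounds Dabc Dacd Dabd Dbcd.
split; apply: iff_trans anti _.
- exact: iff_trans (surrounds_originE _ Dabc) (iff_sym (sg_pattern _ _ _ Dabc)).
- exact: surrounds_not_hemispherical Dabc Dacd Dabd Dbcd.
Qed.
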